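(* Let $U=(u_{ij})\in\mathcal{U}_d(\mathbb{C})$ and let $R_U=(r_{ij})$ be a real matrix with non-negative entries such that $r_{ij}=0$ iff $u_{ij}=0$ and $r_{ij}>0$ otherwise. Then there exist $D_1,D_2\in\mathcal{DU}_d(\mathbb{C})$ such that for all $k,l\in\{1,\dots,d\}$, $$(R_U^TR_U)_{kl}=0\iff (D_1U^\dagger D_2U)_{kl}=0.$$
   Context: $\mathcal{U}_d(\mathbb{C})$ denotes the group of $d\times d$ unitary matrices and $\mathcal{DU}_d(\mathbb{C})$ its subgroup of diagonal unitary matrices. *)

From HB Require Import structures.
From mathcomp Require Import all_boot all_order all_algebra.
From mathcomp Require Import complex.
From mathcomp Require Import reals.
Set Implicit Arguments. Unset Strict Implicit. Unset Printing Implicit Defensive.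
Import Order.TTheory GRing.Theory Num.Theory.
Local Open Scope ring_scope.

Definition adjmx (R : realType) (d : nat) (U : 'M[R[i]]_d) : 'M[R[i]]_d :=
  (map_mx Num.conj U)^T.

Definition unitary_mx (R : realType) (d : nat) (U : 'M[R[i]]_d) : Prop :=
  U *m adjmx U = 1%:M /\ adjmx U *m U = 1%:M.

Definition diag_unitary_mx (R : realType) (d : nat) (D : 'M[R[i]]_d) : Prop :=
  is_diag_mx D /\ unitary_mx D.

(** The (k, l) entry of U^† diag(1, z, ..., z^(d-1)) U is the value at z of the
    polynomial p_kl := sum_j conj(U_jk) U_jl X^j, while the (k, l) entry of
    R_U^T R_U is a sum of non-negative terms R_jk R_jl, so it vanishes exactly
    when every coefficient of p_kl does.  It therefore suffices to pick z on the
    unit circle that is a root of none of the finitely many nonzero p_kl; such a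
    z exists because the unit circle of C is infinite. *)
From HB Require Import structures.
From mathcomp Require Import all_boot all_order all_algebra.
From mathcomp Require Import complex.
From mathcomp Require Import reals.
From mathcomp Require Import ring lra.
Import Order.TTheory GRing.Theory Num.Theory.
Local Open Scope ring_scope.

Section UnitCircle.
Variable R : rcfType.
Local Open Scope complex_scope.

(* Rational parametrization of the unit circle, at the integer points. *)
Definition circle_pt (n : nat) : R[i] :=
  ((1 - n%:R ^+ 2) / (1 + n%:R ^+ 2)) +i* (2 * n%:R / (1 + n%:R ^+ 2)).

Let one_add_sqr_neq0 (x : R) : 1 + x ^+ 2 != 0.
Proof. by rewrite gt_eqF // ltr_pwDl // sqr_ge0. Qed.

Lemma circle_pt_unit n : circle_pt n * Num.conj (circle_pt n) = 1.
Proof.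
have := one_add_sqr_neq0 n%:R; rewrite -[Num.conj _]/(_ -i* _) => ?.
by apply/eqP; rewrite eq_complex /=; apply/andP; split; apply/eqP; field.
Qed.

Lemma circle_pt_inj : injective circle_pt.
Proof.
move=> m n [] /eqP; rewrite eqr_div ?one_add_sqr_neq0 // => /eqP eq_re _.
have : (m%:R ^+ 2 : R) = n%:R ^+ 2 by nra.
by rewrite -!natrX => /eqP; rewrite eqr_nat eqn_exp2r // => /eqP.
Qed.

Lemma unit_circle_nonroot (p : {poly R[i]}) :
  p != 0 -> exists z, z * Num.conj z = 1 /\ ~~ root p z.
Proof.
move=> p_neq0; pose zs := map circle_pt (iota 0 (size p)).
have /allPn [z /mapP [n _ ->] p_n] : ~~ all (root p) zs.
  apply: contra p_neq0 => roots_p; apply/eqP/(roots_geq_poly_eq0 roots_p).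
    by rewrite map_inj_uniq ?iota_uniq //; apply: circle_pt_inj.
  by rewrite size_map size_iota.
by exists (circle_pt n); rewrite circle_pt_unit.
Qed.

Lemma unit_circle_nonroots (I : finType) (p : I -> {poly R[i]}) :
  exists z, z * Num.conj z = 1 /\ forall i, p i != 0 -> (p i).[z] != 0.
Proof.
have /unit_circle_nonroot [z [z_unit z_nonroot]] :
    \prod_(i | p i != 0) p i != 0 by apply/prodf_neq0.
exists z; split=> // i p_i_neq0; move: z_nonroot; rewrite /root horner_prod.
by move/prodf_neq0/(_ i p_i_neq0).
Qed.

End UnitCircle.

Lemma sum_scale_Xn_eq0 (R : nzRingType) n (c : 'I_n -> R) :
  (\sum_(j < n) c j *: 'X^j == 0 :> {poly R}) = [forall j, c j == 0].
Proof.
apply/eqP/forallP => [p0 j | c0]; last first.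
  by rewrite big1 // => j _; rewrite (eqP (c0 j)) scale0r.
have := congr1 (fun q : {poly R} => q`_j) p0; rewrite coef0 coef_sum => <-.
rewrite (bigD1 j) //= coefZ coefXn eqxx mulr1 big1 ?addr0 // => i.
by rewrite -val_eqE coefZ coefXn eq_sym => /negbTE ->; rewrite mulr0.
Qed.

Lemma trmx_mul_nneg_eq0 (R : numDomainType) m n (A : 'M[R]_(m, n)) k l :
  (forall i j, 0 <= A i j) ->
  ((A^T *m A) k l == 0) = [forall i, A i k * A i l == 0].
Proof.
move=> A_ge0; rewrite mxE psumr_eq0 => [|i _]; last by rewrite mxE mulr_ge0.
apply/allP/forallP => [A0 i | A0 i _];
  [have := A0 i (mem_index_enum i) | have := A0 i]; by rewrite mxE.
Qed.

Lemma diag_unitary_mx_diag (R : realType) d (w : 'rV[R[i]]_d) :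
  (forall j, w 0 j * Num.conj (w 0 j) = 1) -> diag_unitary_mx (diag_mx w).
Proof.
move=> w_unit; split; first exact: diag_mx_is_diag.
have adj_diag : adjmx (diag_mx w) = diag_mx (map_mx Num.conj w).
  apply/matrixP => i j; rewrite /adjmx !mxE eq_sym.
  by case: eqP => [->|]; rewrite ?mulr1n ?mulr0n ?rmorph0.
rewrite /unitary_mx adj_diag; split; rewrite mul_diag_mx; apply/matrixP => i j;
  rewrite !mxE; case: eqVneq => [->|]; rewrite ?mulr1n ?mulr0n ?mulr0 //.
by rewrite mulrC w_unit.
Qed.

Lemma adjmx_diag_powers_entry (R : realType) d (U : 'M[R[i]]_d) z k l :
  (adjmx U *m diag_mx (\row_j z ^+ j) *m U) k l =
  (\sum_(j < d) (Num.conj (U j k) * U j l) *: 'X^j).[z].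
Proof.
rewrite mul_mx_diag !mxE horner_sum; apply: eq_bigr => j _.
by rewrite !mxE hornerZ hornerXn mulrAC.
Qed.

Theorem corollary23 (R : realType) (d : nat) (U : 'M[R[i]]_d) (RU : 'M[R]_d) :
  unitary_mx U ->
  (forall i j, 0 <= RU i j) ->
  (forall i j, RU i j = 0 <-> U i j = 0) ->
  (forall i j, U i j != 0 -> 0 < RU i j) ->
  exists D1 D2 : 'M[R[i]]_d,
    diag_unitary_mx D1 /\ diag_unitary_mx D2 /\
    forall k l : 'I_d,
      (RU^T *m RU) k l = 0 <-> (D1 *m adjmx U *m D2 *m U) k l = 0.
Proof.
move=> _ RU_ge0 RU_eq0 _.
pose p (kl : 'I_d * 'I_d) : {poly R[i]} :=
  \sum_(j < d) (Num.conj (U j kl.1) * U j kl.2) *: 'X^j.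
have [z [z_unit z_nonroot]] := @unit_circle_nonroots _ _ p.
exists (diag_mx (const_mx 1)), (diag_mx (\row_j z ^+ j)); split.
  by apply: diag_unitary_mx_diag => j; rewrite mxE rmorph1 mulr1.
split.
  by apply: diag_unitary_mx_diag => j; rewrite mxE rmorphXn -exprMn z_unit expr1n.
move=> k l; rewrite diag_const_mx mul1mx adjmx_diag_powers_entry -/(p (k, l)).
have RU_p : ((RU^T *m RU) k l == 0) = (p (k, l) == 0).
  rewrite trmx_mul_nneg_eq0 // sum_scale_Xn_eq0; apply: eq_forallb => j.
  by rewrite !mulf_eq0 conjC_eq0; congr orb; apply/eqP/eqP => /RU_eq0.
split=> [/eqP | /eqP p_z0]; first by rewrite RU_p => /eqP ->; rewrite horner0.
by apply/eqP; rewrite RU_p; apply: contraTT p_z0; apply: z_nonroot.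
Qed.
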